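(* Let $Q$ be a quantum circuit acting on $w$ qubits and $N$ a positive integer. Let $R^{(N)}$ be the circuit on $Nw+1$ qubits, consisting of a single-qubit register $\mathsf{O}$ (the first qubit) and, for each $j\in\{1,\dots,N\}$, a $(w-1)$-qubit register $\mathsf{R}_j$ and a single-qubit register $\mathsf{X}_j$, which for $j=1,\dots,N$ in turn applies $Q$ to $(\mathsf{O},\mathsf{R}_j)$ (with $\mathsf{O}$ as $Q$'s first qubit) and then the CNOT with control $\mathsf{O}$ and target $\mathsf{X}_j$; its output qubit is $\mathsf{O}$. Then \[p_{\mathrm{acc}}(R^{(N)},1)=\frac12+\frac12\bigl(2p_{\mathrm{acc}}(Q,1)-1\bigr)^N.\]
   Context: For a circuit $Q$ on $w$ qubits and $1\le k\le w$, $p_{\mathrm{acc}}(Q,k)=\mathrm{tr}\,\Pi_{\mathrm{acc}}Q\rho^{(w,k)}_{\mathrm{init}}Q^\dagger$, where $\rho^{(w,k)}_{\mathrm{init}}=(|0\rangle\langle0|)^{\otimes k}\otimes(I/2)^{\otimes(w-k)}$ and $\Pi_{\mathrm{acc}}=|0\rangle\langle0|\otimes I^{\otimes(w-1)}$; i.e., the first $k$ qubits start in $|0\rangle$, the remaining qubits are maximally mixed, and acceptance means the first qubit is measured as $0$ in the computational basis. For $R^{(N)}$ the first qubit is $\mathsf{O}$, so only $\mathsf{O}$ is clean. *)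

(* Quantum operators on n qubits are represented as complex
   (algC) matrices indexed by computational basis states, i.e. bit strings
   {ffun 'I_n -> bool}; qubit 0 is the "first" qubit. *)
From HB Require Import structures.
From mathcomp Require Import all_boot all_order all_algebra algC.
Set Implicit Arguments. Unset Strict Implicit. Unset Printing Implicit Defensive.
Import Order.TTheory GRing.Theory Num.Theory.
Local Open Scope ring_scope.

Notation bits n := {ffun 'I_n -> bool}.

(* A y x = <y| A |x> *)
Definition op (n : nat) := bits n -> bits n -> algC.

Definition opmul n (A B : op n) : op n :=
  fun y x => \sum_(z : bits n) A y z * B z x.
Definition opadj n (A : op n) : op n := fun y x => (A x y)^*.
Definition opid n : op n := fun y x => (y == x)%:R.
Definition optr n (A : op n) : algC := \sum_(x : bits n) A x x.

(* a circuit is (represented by) a unitary operator *)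
Definition unitary n (U : op n) : Prop :=
  (forall y x, opmul U (opadj U) y x = @opid n y x) /\
  (forall y x, opmul (opadj U) U y x = @opid n y x).

Definition Pi_acc n : op n :=
  fun y x => ((y == x) && [forall i : 'I_n, (val i == 0%N) ==> ~~ y i])%:R.

(* rho_init^{(n,k)} = (|0><0|)^{(x)k} (x) (I/2)^{(x)(n-k)} *)
Definition rho_init n (k : nat) : op n :=
  fun y x => (y == x)%:R *
    \prod_(i : 'I_n) (if (val i < k)%N then (~~ x i)%:R else 2^-1).

Definition p_acc n (Q : op n) (k : nat) : algC :=
  optr (opmul (opmul (opmul (@Pi_acc n) Q) (@rho_init n k)) (opadj Q)).

(* embedding of an m-qubit gate U acting on the qubits s 0, ..., s (m-1)
   (in this order) of an n-qubit system; identity on the other qubits *)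
Definition embed m n (s : 'I_m -> 'I_n) (U : op m) : op n :=
  fun y x =>
    if [forall i : 'I_n, ~~ [exists k : 'I_m, s k == i] ==> (y i == x i)]
    then U [ffun k => y (s k)] [ffun k => x (s k)] else 0.

Definition CNOT2 : op 2 :=
  fun y x => ((y ord0 == x ord0) && (y ord_max == xorb (x ord_max) (x ord0)))%:R.

(* Layout of R^{(N)} on N*w+1 qubits: qubit 0 is O; for the (j+1)-th block
   (j = 0..N-1), R_{j+1} is qubits 1+j*w, ..., j*w+w-1 and X_{j+1} is
   qubit 1+j*w+(w-1). *)
Definition sigQ (w N j : nat) : 'I_w -> 'I_(N * w).+1 :=
  fun i => inord (if val i == 0%N then 0%N else (1 + j * w + (val i).-1)%N).
Definition sigX (w N j : nat) : 'I_2 -> 'I_(N * w).+1 :=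
  fun i => inord (if val i == 0%N then 0%N else (1 + j * w + w.-1)%N).

Fixpoint Rpart w N (Q : op w) (m : nat) : op (N * w).+1 :=
  match m with
  | 0 => @opid _
  | m'.+1 => opmul (opmul (embed (@sigX w N m') CNOT2) (embed (@sigQ w N m') Q))
                   (@Rpart w N Q m')
  end.

Definition Rcirc w N (Q : op w) : op (N * w).+1 := @Rpart w N Q N.
Arguments Rcirc {w} N Q.

(* Each CNOT copies O into a fresh, maximally mixed qubit X_j, which dephases O in
   the computational basis: O evolves as a classical two-state Markov chain whose
   transition probabilities are those of Q with the other qubits maximally mixed.
   By unitarity of Q this matrix is doubly stochastic with diagonal entry
   p = p_acc(Q,1), so its nontrivial eigenvalue 2p - 1 gives the formula.
   Concretely, every entry of R^(N) is a product of entries of Q along a unique path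
   of intermediate basis states, and summing squared moduli over the registers of one
   block at a time yields the recursion of the chain. *)

From mathcomp Require Import all_boot all_order all_algebra algC.
From mathcomp Require Import ring zify.
Import Order.TTheory GRing.Theory Num.Theory.
Set Implicit Arguments. Unset Strict Implicit. Unset Printing Implicit Defensive.
Local Open Scope ring_scope.

Lemma card_bits n : #|{: bits n}| = (2 ^ n)%N.
Proof. by rewrite card_ffun card_bool card_ord. Qed.

Lemma sum_sum_eq_bits n :
  \sum_(u : bits n) \sum_(v : bits n) (u == v)%:R = 2 ^+ n :> algC.
Proof.
rewrite (eq_bigr (fun _ => 1)); first by rewrite sumr_const card_bits natrX.
move=> u _; rewrite (bigD1 u) //= eqxx big1 ?addr0 // => v /negbTE.
by rewrite eq_sym => ->.
Qed.

Section Overwrite.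
Variables (k n : nat) (s : 'I_k -> 'I_n).
Hypothesis s_inj : injective s.

Definition overwrite (y : bits n) (u : bits k) : bits n :=
  [ffun i => if [pick j | s j == i] is Some j then u j else y i].

Lemma overwrite_in y u j : overwrite y u (s j) = u j.
Proof.
rewrite ffunE; case: pickP => [j' /eqP/s_inj -> //|/(_ j)].
by rewrite eqxx.
Qed.

Lemma overwrite_out y u i : (forall j, s j != i) -> overwrite y u i = y i.
Proof.
move=> not_img; rewrite ffunE; case: pickP => [j /eqP sj|//].
by have := not_img j; rewrite sj eqxx.
Qed.

(* Every [y] splits uniquely into its bits on the image of [s] and the rest. *)
Lemma sum_overwrite (f : bits n -> algC) :
  \sum_(y : bits n) f y =
  \sum_(y : bits n | [forall j, y (s j) == false]) \sum_(u : bits k) f (overwrite y u).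
Proof.
rewrite pair_big_dep /=.
pose join (p : bits n * bits k) := overwrite p.1 p.2.
pose cut (y : bits n) := (overwrite y [ffun=> false], [ffun j => y (s j)]).
rewrite (reindex_onto join cut) /=; last first.
  move=> y _; apply/ffunP=> i; rewrite /join /=.
  case: (pickP (fun j => s j == i)) => [j /eqP <-|no_j].
    by rewrite overwrite_in ffunE.
  by rewrite !overwrite_out // => j; rewrite no_j.
apply: eq_bigl => [[y u]]; rewrite /join /cut /= andbT.
apply/idP/forallP => [/eqP [<- _] j|y_img0]; first by rewrite overwrite_in ffunE.
apply/eqP; congr pair; apply/ffunP => i; last by rewrite ffunE overwrite_in.
case: (pickP (fun j => s j == i)) => [j /eqP <-|no_j].
  by rewrite overwrite_in ffunE (eqP (y_img0 j)).
by rewrite !overwrite_out // => j; rewrite no_j.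
Qed.

Lemma sum2_overwrite (f : bits n -> bits n -> algC) :
  \sum_(y : bits n) \sum_(x : bits n) f y x =
  \sum_(y : bits n | [forall j, y (s j) == false])
  \sum_(x : bits n | [forall j, x (s j) == false])
  \sum_(u : bits k) \sum_(v : bits k) f (overwrite y u) (overwrite x v).
Proof.
rewrite sum_overwrite; apply: eq_bigr => y _.
under eq_bigr do rewrite sum_overwrite.
by rewrite exchange_big.
Qed.

End Overwrite.

Section FirstBit.
Variable n : nat.
Implicit Type e : bool.

Definition flip0 (u : bits n.+1) : bits n.+1 :=
  [ffun i => if i == ord0 then ~~ u i else u i].

Lemma flip0K : involutive flip0.
Proof. by move=> u; apply/ffunP=> i; rewrite !ffunE; case: eqP => //= _; apply: negbK. Qed.

Definition set_bit0 (u : bits n.+1) (b : bool) : bits n.+1 :=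
  [ffun k => if val k == 0%N then b else u k].

Lemma set_bit0_flip0 (u : bits n.+1) b : set_bit0 (flip0 u) b = set_bit0 u b.
Proof.
apply/ffunP => k; rewrite !ffunE; case: eqP => // /eqP k0.
by case: eqP => // k0'; rewrite k0' eqxx in k0.
Qed.

Lemma set_bit0_id (u : bits n.+1) b : u ord0 = b -> set_bit0 u b = u.
Proof.
move=> u0; apply/ffunP => k; rewrite ffunE; case: eqP => // k0.
by rewrite -u0; congr (u _); apply: val_inj.
Qed.

Lemma sum_bit0_flip (g : bits n.+1 -> algC) e :
  \sum_(u : bits n.+1) (u ord0 == e)%:R * g u =
  \sum_(u : bits n.+1) (u ord0 == ~~ e)%:R * g (flip0 u).
Proof.
rewrite (reindex_inj (can_inj flip0K)) /=.
by apply: eq_bigr => u _; rewrite ffunE eqxx; case: (u ord0); case: e.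
Qed.

Lemma sum_bit0_flip_invariant (h : bits n.+1 -> algC) e e' :
  (forall u, h (flip0 u) = h u) ->
  \sum_(u : bits n.+1) (u ord0 == e)%:R * h u =
  \sum_(u : bits n.+1) (u ord0 == e')%:R * h u.
Proof.
move=> h_flip; case: (eqVneq e e') => [->//|ne].
have -> : e' = ~~ e by move: ne; case: e; case: e'.
by rewrite sum_bit0_flip; apply: eq_bigr => u _; rewrite h_flip.
Qed.

Lemma sum_split_bit0 (h : bits n.+1 -> algC) e :
  \sum_(u : bits n.+1) h u =
  \sum_(u : bits n.+1) (u ord0 == e)%:R * h u +
  \sum_(u : bits n.+1) (u ord0 == ~~ e)%:R * h u.
Proof.
rewrite -big_split /=; apply: eq_bigr => u _.
by case: (u ord0); case: e; rewrite /= mulr0n mulr1n mul0r mul1r ?addr0 ?add0r.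
Qed.

Lemma sum_bit0_eq e : \sum_(u : bits n.+1) (u ord0 == e)%:R = 2 ^+ n :> algC.
Proof.
have total : \sum_(u : bits n.+1) (u ord0 == e)%:R
    + \sum_(u : bits n.+1) (u ord0 == ~~ e)%:R = 2 ^+ n.+1 :> algC.
  rewrite -big_split (eq_bigr (fun _ => 1)) ?sumr_const ?card_bits ?natrX // => u _.
  by case: (u ord0); case: e; rewrite /= ?addr0 ?add0r.
have halves : \sum_(u : bits n.+1) (u ord0 == e)%:R =
                \sum_(u : bits n.+1) (u ord0 == ~~ e)%:R :> algC.
  have := @sum_bit0_flip_invariant (fun _ => 1) e (~~ e) (fun _ => erefl).
  by under eq_bigr do rewrite mulr1; under [in RHS]eq_bigr do rewrite mulr1.
rewrite -halves exprS in total; apply: (@mulfI _ 2); first by rewrite pnatr_eq0.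
by rewrite -total mulr_natl mulr2n.
Qed.

Lemma rho_init1E (v z : bits n.+1) :
  rho_init 1 v z = (v == z)%:R * ((~~ z ord0)%:R * 2^-1 ^+ n).
Proof.
rewrite /rho_init big_ord_recl /=; congr (_ * (_ * _)).
by rewrite (eq_bigr (fun _ => 2^-1)) ?prodr_const ?card_ord.
Qed.

Lemma Pi_accE (y x : bits n.+1) : Pi_acc y x = ((y == x) && ~~ y ord0)%:R.
Proof.
rewrite /Pi_acc; congr (_ && _)%:R; apply/forallP/idP => [/(_ ord0) //|y0 i].
by apply/implyP => /eqP i0; have -> : i = ord0 by apply: val_inj.
Qed.

Lemma p_acc1E (U : op n.+1) : p_acc U 1 = 2^-1 ^+ n *
  \sum_(y : bits n.+1) \sum_(x : bits n.+1)
     (y ord0 == false)%:R * (x ord0 == false)%:R * `|U y x| ^+ 2.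
Proof.
rewrite /p_acc /optr /opmul /opadj mulr_sumr; apply: eq_bigr => y _.
rewrite mulr_sumr; apply: eq_bigr => x _.
rewrite (eq_bigr (fun v => (~~ y ord0)%:R * U y v * rho_init 1 v x)); last first.
  move=> v _; congr (_ * _); rewrite (bigD1 y) //= big1 ?addr0; last first.
    by move=> u /negbTE uy; rewrite Pi_accE eq_sym uy mul0r.
  by rewrite Pi_accE eqxx.
rewrite (bigD1 x) //= big1 ?addr0; last first.
  by move=> v /negbTE vx; rewrite rho_init1E vx !mul0r mulr0.
rewrite rho_init1E eqxx normCK.
by case: (y ord0); case: (x ord0); rewrite /= ?mulr0n ?mulr1n; ring.
Qed.

End FirstBit.

Section Layout.
Variables (w N : nat) (Q : op w.+1).
Local Notation state := (bits (N * w.+1).+1).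
Implicit Types (y x z : state) (i : 'I_(N * w.+1).+1).

(* Qubit [k] of the [j]-th block R_(j+1), X_(j+1), renumbered so that X_(j+1) is
   qubit [0]: a block then has the shape of an input of [Q], whose first qubit
   [Qbits] and [set_bit0] replace by the value of O. *)
Definition blockq j (k : 'I_w.+1) : 'I_(N * w.+1).+1 :=
  inord (if val k == 0%N then j * w.+1 + w.+1 else j * w.+1 + k).

Definition Xq j := blockq j ord0.

Lemma blockq_val j k : (j < N)%N ->
  (blockq j k : nat) = (if val k == 0%N then j * w.+1 + w.+1 else j * w.+1 + k)%N.
Proof.
move=> jN; rewrite /blockq inordK //; have := ltn_ord k.
have : (j.+1 * w.+1 <= N * w.+1)%N by rewrite leq_mul2r.
case: eqP => _; lia.
Qed.

Lemma Xq_val j : (j < N)%N -> (Xq j : nat) = (j * w.+1 + w.+1)%N.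
Proof. by move=> jN; rewrite blockq_val. Qed.

Lemma Xq_neq0 j : (j < N)%N -> (Xq j == ord0) = false.
Proof. by move=> jN; rewrite -val_eqE /= Xq_val // addnS. Qed.

Lemma blockq_inj j : (j < N)%N -> injective (blockq j).
Proof.
move=> jN k l /(congr1 (@nat_of_ord _)); rewrite !blockq_val // => E; apply: val_inj.
by move: E; case: k l => [k ?] [l ?] /=; case: eqP => ?; case: eqP => ? /=; lia.
Qed.

Lemma blockq_surj j i : (j < N)%N ->
  (j * w.+1 < i <= j * w.+1 + w.+1)%N -> exists k, blockq j k = i.
Proof.
move=> jN i_in; case: (eqVneq (i : nat) (j * w.+1 + w.+1)%N) => [iX|iX].
  by exists ord0; apply: val_inj; rewrite /= blockq_val // iX.
have k_lt : (i - j * w.+1 < w.+1)%N by move/eqP: iX; lia.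
exists (Ordinal k_lt); apply: val_inj; rewrite /= blockq_val //=.
by case: eqP => ?; lia.
Qed.

Lemma sigQ_val j k : (j < N)%N ->
  (@sigQ w.+1 N j k : nat) = (if val k == 0%N then 0 else j * w.+1 + k)%N.
Proof.
move=> jN; have : (j.+1 * w.+1 <= N * w.+1)%N by rewrite leq_mul2r.
by rewrite /sigQ; case: k => [[|k] ?] /= ?; rewrite inordK //; lia.
Qed.

Lemma sigX_val j k : (j < N)%N ->
  (@sigX w.+1 N j k : nat) = (if val k == 0%N then 0 else j * w.+1 + w.+1)%N.
Proof.
move=> jN; have : (j.+1 * w.+1 <= N * w.+1)%N by rewrite leq_mul2r.
by rewrite /sigX; case: k => [[|k] ?] /= ?; rewrite inordK //; lia.
Qed.

Definition inR j i := (j * w.+1 < i < j * w.+1 + w.+1)%N.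

Lemma sigX_image m i : (m < N)%N ->
  [exists k, @sigX w.+1 N m k == i] = (i == ord0) || (i == Xq m).
Proof.
move=> mN; apply/existsP/orP => [[k /eqP <-]|[] /eqP ->].
- case: k => [[|[|k]] ?] //; [left|right]; by rewrite -val_eqE /= sigX_val ?Xq_val.
- by exists ord0; rewrite -val_eqE /= sigX_val.
- by exists ord_max; rewrite -val_eqE /= sigX_val // Xq_val.
Qed.

Lemma sigQ_image m i : (m < N)%N ->
  [exists k, @sigQ w.+1 N m k == i] = (i == ord0) || inR m i.
Proof.
move=> mN; rewrite /inR; apply/existsP/orP => [[k /eqP <-]|[/eqP ->|i_in]].
- rewrite sigQ_val //; case: k => [[|k] ?] /=; last by right; lia.
  by left; rewrite -val_eqE /= sigQ_val.
- by exists ord0; rewrite -val_eqE /= sigQ_val.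
have k_lt : (i - m * w.+1 < w.+1)%N by lia.
exists (Ordinal k_lt); rewrite -val_eqE /= sigQ_val //=.
by apply/eqP; case: eqP => ?; lia.
Qed.

Definition cnot_at m y : state :=
  [ffun i => if i == Xq m then xorb (y (Xq m)) (y ord0) else y i].

Lemma cnot_at_other m y i : (m < N)%N ->
  (i : nat) != (m * w.+1 + w.+1)%N -> cnot_at m y i = y i.
Proof.
move=> mN iX; rewrite ffunE; case: eqP => // iXm.
by move: iX; rewrite iXm Xq_val // eqxx.
Qed.

Lemma cnot_at0 m y : (m < N)%N -> cnot_at m y ord0 = y ord0.
Proof. by move=> mN; rewrite ffunE eq_sym Xq_neq0. Qed.

Lemma embed_CNOT2 m y z : (m < N)%N ->
  embed (@sigX w.+1 N m) CNOT2 y z = (z == cnot_at m y)%:R.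
Proof.
move=> mN; rewrite /embed /CNOT2 !ffunE.
have -> : @sigX w.+1 N m ord0 = ord0 by apply: val_inj; rewrite /= sigX_val.
have -> : @sigX w.+1 N m ord_max = Xq m.
  by apply: val_inj; rewrite /= sigX_val // Xq_val.
set same_off := [forall i, _].
have -> : forall b : bool, (if same_off then b%:R else 0) = (same_off && b)%:R :> algC.
  by case: same_off.
congr (nat_of_bool _)%:R.
apply/idP/eqP => [/andP [/forallP off /andP [/eqP y0 /eqP yX]]|z_cnot].
  apply/ffunP => i; rewrite ffunE; case: eqP => [->|/eqP iX].
    by rewrite yX -y0; case: (z _); case: (y ord0).
  case: (eqVneq i ord0) => [->|i0] //.
  by have := off i; rewrite sigX_image // (negbTE i0) (negbTE iX) => /eqP.
rewrite /same_off z_cnot !ffunE eqxx (eq_sym ord0) Xq_neq0 // eqxx /=; apply/andP; split.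
  apply/forallP => i; rewrite sigX_image // negb_or; apply/implyP => /andP [_ iX].
  by rewrite ffunE (negbTE iX).
by apply/eqP; case: (y _); case: (y _).
Qed.

Definition Qbits j (b : bool) y : bits w.+1 :=
  [ffun k => if val k == 0%N then b else y (blockq j k)].

Lemma QbitsE j b y k : Qbits j b y k = if val k == 0%N then b else y (blockq j k).
Proof. by rewrite ffunE. Qed.

Lemma sigQ_Qbits m y : (m < N)%N ->
  [ffun k => y (@sigQ w.+1 N m k)] = Qbits m (y ord0) y.
Proof.
move=> mN; apply/ffunP => k; rewrite !ffunE.
case: eqP => [k0|/eqP k0]; congr (y _); apply: val_inj; rewrite /= sigQ_val //.
  by rewrite k0.
by rewrite blockq_val // (negbTE k0).
Qed.

Definition agree_offQ m y z :=
  [forall i, ~~ ((i == ord0) || inR m i) ==> (y i == z i)].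

Lemma embed_QE m y z : (m < N)%N ->
  embed (@sigQ w.+1 N m) Q y z =
  (agree_offQ m y z)%:R * Q (Qbits m (y ord0) y) (Qbits m (z ord0) z).
Proof.
move=> mN; rewrite /embed !sigQ_Qbits //.
have -> : [forall i, ~~ [exists k, @sigQ w.+1 N m k == i] ==> (y i == z i)] =
          agree_offQ m y z.
  by apply: eq_forallb => i; rewrite sigQ_image.
by case: (agree_offQ m y z); rewrite ?mul1r ?mul0r.
Qed.

(* Along a nonzero entry of the circuit from [x] to [y], the value of O after
   step [m] is copied into X_m by the CNOT, i.e. it is [y (Xq m) (+) x (Xq m)]. *)
Definition Obit m y x : bool :=
  if m is m'.+1 then xorb (y (Xq m')) (x (Xq m')) else x ord0.

Definition agree_above m y x :=
  [forall i : 'I_(N * w.+1).+1, (m * w.+1 < i)%N ==> (y i == x i)].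

Lemma agree_above0_eq y x : agree_above 0 y x -> y ord0 = x ord0 -> y = x.
Proof.
move=> /forallP same_above y0; apply/ffunP => i; case: (eqVneq i ord0) => [->//|i0].
by apply/eqP/(implyP (same_above i)); rewrite mul0n lt0n; move: i0; rewrite -val_eqE.
Qed.

Definition Rpart_entry m y x : algC :=
  (agree_above m y x)%:R * (y ord0 == Obit m y x)%:R *
  \prod_(j < m) Q (Qbits j (Obit j.+1 y x) y) (Qbits j (Obit j y x) x).

Lemma Obit_local j y y' x : (j <= N)%N ->
  (forall i, (0 < i <= j * w.+1)%N -> y i = y' i) -> Obit j y x = Obit j y' x.
Proof.
case: j => [//|j] jN same_low /=; rewrite same_low //.
by rewrite Xq_val // mulSnr; lia.
Qed.

Lemma Qbits_local j b y y' : (j < N)%N ->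
  (forall i, (0 < i <= j.+1 * w.+1)%N -> y i = y' i) -> Qbits j b y = Qbits j b y'.
Proof.
move=> jN same_low; apply/ffunP => k; rewrite !ffunE; case: eqP => // /eqP k0.
rewrite same_low // blockq_val // (negbTE k0) mulSnr.
by move: k0; case: k => k ? /= ?; lia.
Qed.

(* The unique intermediate basis state through which step [m+1] can connect [x] to [y]. *)
Definition mid_state m y x : state :=
  [ffun i => if i == ord0 then Obit m y x
             else if inR m i then x i else cnot_at m y i].

Lemma mid_state_agree_offQ m y x : agree_offQ m (cnot_at m y) (mid_state m y x).
Proof.
apply/forallP => i; apply/implyP; rewrite negb_or => /andP [i0 /negbTE iR].
by rewrite [mid_state _ _ _ i]ffunE (negbTE i0) iR.
Qed.

Lemma agree_offQ_low m y z : (m < N)%N -> agree_offQ m (cnot_at m y) z ->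
  forall i, (0 < i <= m * w.+1)%N -> z i = y i.
Proof.
move=> mN /forallP same_off i i_low; have := same_off i.
rewrite cnot_at_other //; last by apply/eqP; lia.
rewrite /inR; have -> : (i == ord0) = false by rewrite -val_eqE /=; apply/negbTE/eqP; lia.
have -> : (m * w.+1 < i < m * w.+1 + w.+1)%N = false by apply/negbTE/negP; lia.
by move=> /= /eqP.
Qed.

Lemma mid_state_low m y x : (m < N)%N ->
  forall i, (0 < i <= m * w.+1)%N -> mid_state m y x i = y i.
Proof. by move=> mN; apply: agree_offQ_low (mid_state_agree_offQ m y x). Qed.

Lemma mid_state_unique m y x z : (m < N)%N ->
  agree_offQ m (cnot_at m y) z -> agree_above m z x -> z ord0 = Obit m z x ->
  z = mid_state m y x.
Proof.
move=> mN same_off /forallP same_above z0; apply/ffunP => i; rewrite ffunE.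
case: eqP => [->|/eqP i0].
  by rewrite z0; apply: Obit_local (ltnW mN) (agree_offQ_low mN same_off).
case: ifP => [/andP [i_above _]|/negbT iR]; first exact/eqP/(implyP (same_above i)).
by move/forallP: same_off => /(_ i); rewrite negb_or i0 iR => /eqP.
Qed.

Lemma Obit_mid_state j m y x : (m < N)%N -> (j <= m)%N ->
  Obit j (mid_state m y x) x = Obit j y x.
Proof.
move=> mN jm; apply: Obit_local; first exact: leq_trans (ltnW mN).
move=> i /andP [i0 i_le]; apply: mid_state_low; rewrite // i0.
by apply: leq_trans i_le _; rewrite leq_mul2r jm orbT.
Qed.

Lemma Qbits_cnot_at m b y : (m < N)%N -> Qbits m b (cnot_at m y) = Qbits m b y.
Proof.
move=> mN; apply/ffunP => k; rewrite !QbitsE; case: eqP => // /eqP k0.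
rewrite cnot_at_other // blockq_val // (negbTE k0).
by move: k0; case: k => k ? /= ?; apply/eqP; lia.
Qed.

Lemma Qbits_mid_state m b y x : (m < N)%N -> Qbits m b (mid_state m y x) = Qbits m b x.
Proof.
move=> mN; apply/ffunP => k; rewrite !QbitsE; case: eqP => // /eqP k0.
have k_pos : (0 < k < w.+1)%N by rewrite ltn_ord lt0n andbT.
have kv := blockq_val k mN; rewrite (negbTE k0) in kv.
rewrite [mid_state _ _ _ _]ffunE.
have -> : (blockq m k == ord0) = false by rewrite -val_eqE /= kv; apply/negbTE/eqP; lia.
by rewrite /inR kv; case: ifP => //; lia.
Qed.

Lemma agree_above_mid_state m y x : (m < N)%N ->
  agree_above m (mid_state m y x) x =
  agree_above m.+1 y x && (xorb (y (Xq m)) (y ord0) == x (Xq m)).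
Proof.
move=> mN; have Xv := Xq_val mN.
have i_not0 i : (0 < i)%N -> (i == ord0) = false.
  by move=> ?; rewrite -val_eqE /=; apply/negbTE/eqP; lia.
apply/forallP/andP => [same|[/forallP same /eqP yX] i].
  split.
    apply/forallP => i; apply/implyP => i_above; have := implyP (same i).
    rewrite ffunE i_not0; last by lia.
    have -> : inR m i = false by apply/negbTE; rewrite /inR; apply/negP; lia.
    by rewrite cnot_at_other //; [apply; lia | apply/eqP; lia].
  have := implyP (same (Xq m)); rewrite ffunE Xq_neq0 //.
  have -> : inR m (Xq m) = false by apply/negbTE; rewrite /inR Xv; apply/negP; lia.
  by rewrite ffunE eqxx; apply; rewrite Xv; lia.
apply/implyP => i_above; rewrite ffunE i_not0; last by lia.
case: ifP => // iR; case: (eqVneq i (Xq m)) => [->|iX]; first by rewrite ffunE eqxx yX.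
rewrite cnot_at_other //; last by rewrite -Xv; apply: contra iX => /eqP/val_inj ->.
by apply: (implyP (same i)); move: iR iX; rewrite /inR -val_eqE /= Xv => /negbT; lia.
Qed.

Lemma Rpart_entry_step m y x : (m < N)%N ->
  embed (@sigQ w.+1 N m) Q (cnot_at m y) (mid_state m y x) *
  Rpart_entry m (mid_state m y x) x = Rpart_entry m.+1 y x.
Proof.
move=> mN; have mid0 : mid_state m y x ord0 = Obit m y x by rewrite ffunE eqxx.
rewrite embed_QE // mid_state_agree_offQ mul1r cnot_at0 // mid0.
rewrite Qbits_cnot_at // Qbits_mid_state // /Rpart_entry agree_above_mid_state //.
rewrite mid0 Obit_mid_state // eqxx mulr1.
under eq_bigr => j _.
  have jm := ltn_ord j; have jN := ltn_trans jm mN.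
  rewrite (Obit_mid_state y x mN jm) (Obit_mid_state y x mN (ltnW jm)).
  rewrite (@Qbits_local j _ (mid_state m y x) y jN); first over.
  move=> i /andP [i0 i_le]; rewrite mid_state_low // i0.
  by apply: leq_trans i_le _; rewrite leq_mul2r ltn_ord orbT.
rewrite big_ord_recr /=.
case: (y ord0) (y (Xq m)) (x (Xq m)) => -[] [];
  rewrite /= ?andbT ?andbF ?mulr0n ?mulr1n; ring.
Qed.

Lemma RpartE m y x : (m <= N)%N -> @Rpart w.+1 N Q m y x = Rpart_entry m y x.
Proof.
elim: m y x => [|m IH] y x mN.
  rewrite /= /opid /Rpart_entry big_ord0 mulr1 -natrM mulnb; congr (nat_of_bool _)%:R.
  apply/eqP/andP => [->|[same_above /eqP y0]]; last exact: agree_above0_eq.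
  by split => //; apply/forallP => i; rewrite eqxx implybT.
have step z : opmul (embed (@sigX w.+1 N m) CNOT2) (embed (@sigQ w.+1 N m) Q) y z =
              embed (@sigQ w.+1 N m) Q (cnot_at m y) z.
  rewrite /opmul (bigD1 (cnot_at m y)) //= embed_CNOT2 // eqxx mul1r big1 ?addr0 //.
  by move=> u /negbTE ne; rewrite embed_CNOT2 // ne mul0r.
have IHm z := IH z x (ltnW mN).
rewrite /= {1}/opmul; under eq_bigr do rewrite step IHm.
rewrite (bigD1 (mid_state m y x)) //= big1 ?addr0; first exact: Rpart_entry_step.
move=> z /eqP ne; rewrite embed_QE // /Rpart_entry.
case: (boolP (agree_offQ m (cnot_at m y) z)) => [same_off|]; last by rewrite !mul0r.
case: (boolP (agree_above m z x)) => [same_above|]; last by rewrite !(mul0r, mulr0).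
case: eqP => [z0|]; last by rewrite !(mul0r, mulr0).
by case: ne; apply: mid_state_unique.
Qed.

End Layout.

Arguments blockq {w N} j k.
Arguments Xq {w N} j.

Section Transition.
Variables (n : nat) (Q : op n.+1).

(* [2^-n * trans_weight b a] is the probability that [Q] outputs [b] on its first
   qubit when that qubit is [a] and the others are maximally mixed. *)
Definition trans_weight b a : algC :=
  \sum_(u : bits n.+1) \sum_(v : bits n.+1)
     (u ord0 == b)%:R * (v ord0 == a)%:R * `|Q u v| ^+ 2.

Lemma p_acc_trans_weight : p_acc Q 1 = 2^-1 ^+ n * trans_weight false false.
Proof. by rewrite p_acc1E. Qed.

Lemma trans_weight_sum_out a : unitary Q ->
  trans_weight false a + trans_weight true a = 2 ^+ n.
Proof.
move=> [_ QhQ]; rewrite /trans_weight [X in X + _]exchange_big [X in _ + X]exchange_big.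
rewrite -big_split /= -(sum_bit0_eq n a); apply: eq_bigr => v _.
have := QhQ v v; rewrite /opmul /opadj /opid eqxx /= => col_norm.
transitivity ((v ord0 == a)%:R * \sum_z (Q z v)^* * Q z v); last by rewrite col_norm mulr1.
rewrite mulr_sumr -big_split /=; apply: eq_bigr => u _.
by rewrite normCK; case: (u ord0); rewrite /= ?mulr0n ?mulr1n; ring.
Qed.

Lemma trans_weight_sum_in b : unitary Q ->
  trans_weight b false + trans_weight b true = 2 ^+ n.
Proof.
move=> [QQh _]; rewrite /trans_weight -big_split /= -(sum_bit0_eq n b).
apply: eq_bigr => u _; have := QQh u u; rewrite /opmul /opadj /opid eqxx /= => row_norm.
transitivity ((u ord0 == b)%:R * \sum_z Q u z * (Q u z)^*); last by rewrite row_norm mulr1.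
rewrite mulr_sumr -big_split /=; apply: eq_bigr => v _.
by rewrite normCK; case: (v ord0); rewrite /= ?mulr0n ?mulr1n; ring.
Qed.

Lemma trans_weightE b a : unitary Q ->
  trans_weight b a = if b == a then trans_weight false false
                     else 2 ^+ n - trans_weight false false.
Proof.
move=> QU; have out0 := trans_weight_sum_out false QU.
have out1 := trans_weight_sum_out true QU; have in0 := trans_weight_sum_in false QU.
case: b; case: a => /=.
- by apply: (addrI (trans_weight false true)); rewrite out1 -in0 addrC.
- by rewrite -out0; ring.
- by rewrite -in0; ring.
- by [].
Qed.

(* The X qubits [u ord0], [v ord0] of a block enter only through their xor, the
   value of O after the step: for each [v] one value of [u ord0] matches, and the
   two values of [v ord0] give the factor 2. *)
Lemma sum_xor_trans_weight b c :
  \sum_(u : bits n.+1) \sum_(v : bits n.+1)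
     (xorb (u ord0) (v ord0) == b)%:R * `|Q (set_bit0 u b) (set_bit0 v c)| ^+ 2
  = 2 * trans_weight b c.
Proof.
rewrite exchange_big /=.
rewrite (eq_bigr (fun v => \sum_(u : bits n.+1)
           (u ord0 == b)%:R * `|Q (set_bit0 u b) (set_bit0 v c)| ^+ 2)); last first.
  move=> v _; rewrite (eq_bigr (fun u : bits n.+1 =>
    (u ord0 == xorb b (v ord0))%:R * `|Q (set_bit0 u b) (set_bit0 v c)| ^+ 2)); last first.
    by move=> u _; congr (_%:R * _); case: (u ord0); case: (v ord0); case: b.
  by apply: sum_bit0_flip_invariant => u; rewrite set_bit0_flip0.
rewrite exchange_big /= /trans_weight mulr_sumr; apply: eq_bigr => u _.
rewrite -mulr_sumr (sum_split_bit0 _ c).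
rewrite (@sum_bit0_flip_invariant _ (fun v => `|Q (set_bit0 u b) (set_bit0 v c)| ^+ 2)
           (~~ c) c); last by move=> v; rewrite set_bit0_flip0.
rewrite -mulr2n -[_ *+ 2]mulr_natl mulrCA; congr (_ * _).
rewrite mulr_sumr; apply: eq_bigr => v _.
move: (@set_bit0_id _ u b) (@set_bit0_id _ v c).
by case: (u ord0); case: (v ord0); case: b; case: c => u_id v_id /=;
  rewrite ?mulr0n ?mulr1n; try rewrite (u_id erefl); try rewrite (v_id erefl); ring.
Qed.

End Transition.

Section Weights.
Variables (w N : nat) (Q : op w.+1).
Local Notation state := (bits (N * w.+1).+1).
Implicit Types (y x : state) (u v : bits w.+1) (i : 'I_(N * w.+1).+1).

Lemma overwrite_block_out m y u i : (m < N)%N ->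
  (i <= m * w.+1)%N || (m * w.+1 + w.+1 < i)%N -> overwrite (blockq m) y u i = y i.
Proof.
move=> mN i_out; apply: overwrite_out => k; apply/eqP => ki; move: i_out.
by rewrite -ki blockq_val //; case: k {ki} => k ? /=; case: eqP => [_|/eqP k0]; lia.
Qed.

Lemma overwrite_block_low m y u i : (m < N)%N -> (i <= m * w.+1)%N ->
  overwrite (blockq m) y u i = y i.
Proof. by move=> mN i_le; rewrite overwrite_block_out // i_le. Qed.

Lemma overwrite_block0 m y u : (m < N)%N -> overwrite (blockq m) y u ord0 = y ord0.
Proof. by move=> mN; rewrite overwrite_block_low. Qed.

Lemma overwrite_Xq m y u : (m < N)%N -> overwrite (blockq m) y u (Xq m) = u ord0.
Proof. by move=> mN; rewrite /Xq overwrite_in //; apply: blockq_inj. Qed.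

Lemma Qbits_overwrite m b y u : (m < N)%N ->
  Qbits m b (overwrite (blockq m) y u) = set_bit0 u b.
Proof.
move=> mN; apply/ffunP => k; rewrite QbitsE [set_bit0 _ _ _]ffunE; case: eqP => // _.
by rewrite overwrite_in //; apply: blockq_inj.
Qed.

Lemma Qbits_overwrite_low j m b y u : (m < N)%N -> (j < m)%N ->
  Qbits j b (overwrite (blockq m) y u) = Qbits j b y.
Proof.
move=> mN jm; apply: Qbits_local; first exact: ltn_trans mN.
move=> i /andP [_ i_le]; apply: overwrite_block_low => //.
by apply: leq_trans i_le _; rewrite leq_mul2r jm orbT.
Qed.

Lemma Obit_overwrite j m y x u v : (m < N)%N -> (j <= m)%N ->
  Obit j (overwrite (blockq m) y u) (overwrite (blockq m) x v) = Obit j y x.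
Proof.
move=> mN; case: j => [|j] jm /=; first by rewrite !overwrite_block0.
have jN : (j < N)%N by apply: leq_trans mN; apply: ltnW.
have Xj_low : (@Xq w N j <= m * w.+1)%N by rewrite Xq_val // -mulSnr leq_mul2r jm orbT.
by rewrite !overwrite_block_low.
Qed.

Lemma agree_above_overwrite m y x u v : (m < N)%N ->
  agree_above m.+1 (overwrite (blockq m) y u) (overwrite (blockq m) x v) =
  agree_above m.+1 y x.
Proof.
move=> mN; apply: eq_forallb => i; case: (boolP (m.+1 * w.+1 < i)%N) => //= i_above.
by rewrite !overwrite_block_out // -mulSnr i_above orbT.
Qed.

Lemma agree_above_overwrite_block m y x u v : (m < N)%N ->
  agree_above m (overwrite (blockq m) y u) (overwrite (blockq m) x v) =
  agree_above m.+1 y x && (u == v).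
Proof.
move=> mN; have b_inj := blockq_inj mN.
have outside i : (m.+1 * w.+1 < i)%N -> (i <= m * w.+1)%N || (m * w.+1 + w.+1 < i)%N.
  by rewrite -mulSnr => ->; rewrite orbT.
apply/forallP/andP => [same|[/forallP same /eqP <-] i].
  split.
    apply/forallP => i; apply/implyP => i_above; have := implyP (same i).
    rewrite !overwrite_block_out ?outside //; apply; move: i_above; rewrite mulSnr; lia.
  apply/eqP/ffunP => k; have k_above : (m * w.+1 < @blockq w N m k)%N.
    by rewrite blockq_val //; case: k => k ? /=; case: eqP => [_|/eqP k0]; lia.
  by have := implyP (same (blockq m k)) k_above; rewrite !overwrite_in // => /eqP.
apply/implyP => i_above; case: (boolP (m.+1 * w.+1 < i)%N) => i_above'.
  by rewrite !overwrite_block_out ?outside //; apply: (implyP (same i)).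
have [k <-] : exists k, blockq m k = i.
  by apply: blockq_surj => //; move: i_above'; rewrite mulSnr; lia.
by rewrite !overwrite_in.
Qed.

Definition path_weight m y x : algC :=
  \prod_(j < m) `|Q (Qbits j (Obit j.+1 y x) y) (Qbits j (Obit j y x) x)| ^+ 2.

(* [2^-(N * w.+1) * Oweight m b] is the probability that O holds [b] after [m]
   steps. *)
Definition Oweight m b : algC :=
  \sum_(y : state) \sum_(x : state) (y ord0 == false)%:R * (x ord0 == false)%:R *
    (agree_above m y x)%:R * (Obit m y x == b)%:R * path_weight m y x.

Definition prefix_weight m y x : algC :=
  (y ord0 == false)%:R * (x ord0 == false)%:R * (agree_above m.+1 y x)%:R *
  path_weight m y x.

Lemma path_weight_overwrite m y x u v : (m < N)%N ->
  path_weight m (overwrite (blockq m) y u) (overwrite (blockq m) x v) = path_weight m y x.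
Proof.
move=> mN; apply: eq_bigr => j _; have jm := ltn_ord j; have jm' := ltnW jm.
by rewrite !Obit_overwrite // !Qbits_overwrite_low.
Qed.

Lemma path_weight_overwrite_succ m y x u v : (m < N)%N ->
  path_weight m.+1 (overwrite (blockq m) y u) (overwrite (blockq m) x v) =
  path_weight m y x *
  `|Q (set_bit0 u (xorb (u ord0) (v ord0))) (set_bit0 v (Obit m y x))| ^+ 2.
Proof.
move=> mN; rewrite /path_weight big_ord_recr; congr (_ * _).
  apply: eq_bigr => j _; have jm := ltn_ord j; have jm' := ltnW jm.
  by rewrite !Obit_overwrite //= ?Qbits_overwrite_low.
by rewrite /= !overwrite_Xq // !Qbits_overwrite // Obit_overwrite.
Qed.

Lemma Oweight_succ m b : (m < N)%N ->
  Oweight m.+1 b =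
  \sum_(y : state | [forall k, y (blockq m k) == false])
  \sum_(x : state | [forall k, x (blockq m k) == false])
    prefix_weight m y x * (2 * trans_weight Q b (Obit m y x)).
Proof.
move=> mN; rewrite /Oweight (sum2_overwrite (blockq_inj mN)).
apply: eq_bigr => y _; apply: eq_bigr => x _.
rewrite -sum_xor_trans_weight mulr_sumr; apply: eq_bigr => u _.
rewrite mulr_sumr; apply: eq_bigr => v _.
rewrite !overwrite_block0 // agree_above_overwrite // path_weight_overwrite_succ //=.
rewrite !overwrite_Xq // /prefix_weight.
by case: (u ord0); case: (v ord0); case: b; rewrite /= ?mulr0n ?mulr1n; ring.
Qed.

Lemma Oweight_split m a : (m < N)%N ->
  Oweight m a =
  \sum_(y : state | [forall k, y (blockq m k) == false])
  \sum_(x : state | [forall k, x (blockq m k) == false])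
    prefix_weight m y x * (Obit m y x == a)%:R * 2 ^+ w.+1.
Proof.
move=> mN; rewrite /Oweight (sum2_overwrite (blockq_inj mN)).
apply: eq_bigr => y _; apply: eq_bigr => x _.
rewrite -(sum_sum_eq_bits w.+1) mulr_sumr; apply: eq_bigr => u _.
rewrite mulr_sumr; apply: eq_bigr => v _.
rewrite !overwrite_block0 // agree_above_overwrite_block // Obit_overwrite //.
by rewrite path_weight_overwrite // -mulnb natrM /prefix_weight; ring.
Qed.

Lemma Oweight_rec m b : (m < N)%N ->
  2 ^+ w.+1 * Oweight m.+1 b =
  2 * (trans_weight Q b true * Oweight m true +
       trans_weight Q b false * Oweight m false).
Proof.
move=> mN; rewrite Oweight_succ // !Oweight_split // !mulr_sumr -big_split /= mulr_sumr.
apply: eq_bigr => y _; rewrite !mulr_sumr -big_split /= mulr_sumr; apply: eq_bigr => x _.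
by case: (Obit m y x); rewrite /= ?mulr0n ?mulr1n; ring.
Qed.

Lemma Oweight0 b : Oweight 0 b = (b == false)%:R * 2 ^+ (N * w.+1).
Proof.
rewrite /Oweight exchange_big /= -(sum_bit0_eq (N * w.+1) false) mulr_sumr.
apply: eq_bigr => x _; rewrite (bigD1 x) //= big1 ?addr0; last first.
  move=> y yx; case: (boolP (agree_above 0 y x)) => [same|]; last by rewrite !(mulr0, mul0r).
  have : y ord0 != x ord0 by apply: contra yx => /eqP y0; apply/eqP/agree_above0_eq.
  by case: (y ord0); case: (x ord0); rewrite //= ?mulr0n ?(mul0r, mulr0).
have -> : agree_above 0 x x by apply/forallP => i; rewrite eqxx implybT.
by rewrite /path_weight big_ord0 /=; case: (x ord0); case: b; rewrite /= ?mulr0n ?mulr1n; ring.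
Qed.

Lemma sqnorm_Rpart_entry m y x :
  (y ord0 == false)%:R * (x ord0 == false)%:R * `|Rpart_entry Q m y x| ^+ 2 =
  (y ord0 == false)%:R * (x ord0 == false)%:R * (agree_above m y x)%:R *
  (Obit m y x == false)%:R * path_weight m y x.
Proof.
rewrite /Rpart_entry /path_weight !normrM !exprMn normr_prod prodrXl.
move: (agree_above m y x) (Obit m y x) => a c.
by case: (y ord0); case: a; case: c; rewrite /= ?mulr0n ?mulr1n ?normr0 ?normr1; ring.
Qed.

Lemma p_acc_Rcirc : p_acc (Rcirc N Q) 1 = 2^-1 ^+ (N * w.+1) * Oweight N false.
Proof.
rewrite p_acc1E /Oweight; congr (_ * _); apply: eq_bigr => y _; apply: eq_bigr => x _.
by rewrite /Rcirc RpartE // sqnorm_Rpart_entry.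
Qed.

Lemma OweightE m b : unitary Q -> (m <= N)%N ->
  Oweight m b = 2 ^+ (N * w.+1) * 2^-1 * (1 + (-1) ^+ b * (2 * p_acc Q 1 - 1) ^+ m).
Proof.
move=> QU; elim: m b => [|m IH] b mN.
  by rewrite Oweight0 expr0; case: b; rewrite /= ?mulr0n ?mulr1n; field.
have twoA_neq0 : (2 * 2 ^+ w : algC) != 0 by rewrite mulf_neq0 // ?expf_neq0 // pnatr_eq0.
have IHm := IH ^~ (ltnW mN).
apply: (mulfI twoA_neq0); rewrite -exprS Oweight_rec // !IHm.
rewrite (trans_weightE b true QU) (trans_weightE b false QU) p_acc_trans_weight.
rewrite exprVn !exprS; move: (trans_weight Q false false) (2 ^+ w) twoA_neq0 => t A.
by rewrite mulf_eq0 negb_or => /andP [_ A_neq0]; case: b => /=; field; rewrite A_neq0.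
Qed.

End Weights.

Theorem proposition12 (w N : nat) (Q : op w) :
  (0 < w)%N -> (0 < N)%N -> unitary Q ->
  p_acc (Rcirc N Q) 1 = 2^-1 + 2^-1 * (2 * p_acc Q 1 - 1) ^+ N.
Proof.
case: w Q => [//|w] Q _ _ QU.
rewrite p_acc_Rcirc (OweightE false QU (leqnn N)) expr0 mul1r exprVn.
by field; rewrite expf_neq0 // pnatr_eq0.
Qed.
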